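(* Let $G$ be a graph of order $n$ with $\alpha(G)=2$. Then $m_G[0,n-2]=2$ if and only if $G \cong K_1 \nabla K_{n-m} \nabla K_{m-1}$ for some integer $m$ with $2\le m\le n$; equivalently, $G\cong (K_1\cup K_{m-1})\nabla K_{n-m}$ (where $K_0$ denotes the empty graph).
   Context: All graphs are finite and simple. The Laplacian matrix of $G$ is $L(G)=D(G)-A(G)$ ($D(G)$ the diagonal degree matrix, $A(G)$ the adjacency matrix); its eigenvalues with multiplicity are the Laplacian eigenvalues. For an interval $I$, $m_G I$ is the number of Laplacian eigenvalues of $G$ (with multiplicity) in $I$. $\alpha(G)$ is the independence number. $K_k$ is the complete graph on $k$ vertices, $G_1\cup G_2$ is disjoint union. For pairwise disjoint graphs $G_1,\dots,G_k$, $G_1\nabla G_2\nabla\cdots\nabla G_k$ is the graph obtained from $G_1\cup\cdots\cup G_k$ by adding all edges $xy$ with $x\in V(G_i)$, $y\in V(G_{i+1})$ for $i=1,\dots,k-1$; in particular $G_1\nabla G_2$ is the join. *)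

From HB Require Import structures.
From mathcomp Require Import all_boot all_order all_algebra.
From mathcomp Require Import polyrcf.
Set Implicit Arguments. Unset Strict Implicit. Unset Printing Implicit Defensive.
Import Order.TTheory GRing.Theory Num.Theory.
Local Open Scope ring_scope.

Definition simple_graph (T : finType) (e : rel T) :=
  symmetric e /\ irreflexive e.

Definition independent (T : finType) (e : rel T) (S : {set T}) :=
  [forall x in S, forall y in S, ~~ e x y].

Definition alpha (T : finType) (e : rel T) : nat :=
  \max_(S : {set T} | independent e S) #|S|.

Definition deg (T : finType) (e : rel T) (x : T) : nat := #|[set y | e x y]|.

Definition adjmx (R : nzRingType) (T : finType) (e : rel T) : 'M[R]_#|T| :=
  \matrix_(i, j) (e (enum_val i) (enum_val j))%:R.
Definition degmx (R : nzRingType) (T : finType) (e : rel T) : 'M[R]_#|T| :=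
  \matrix_(i, j) ((i == j)%:R * (deg e (enum_val i))%:R).
Definition laplacian (R : nzRingType) (T : finType) (e : rel T) : 'M[R]_#|T| :=
  degmx R e - adjmx R e.

Definition mG_closed (R : rcfType) (T : finType) (e : rel T) (a b : R) : nat :=
  let p := char_poly (laplacian R e) in
  \sum_(x <- rootsR p | (a <= x) && (x <= b)) (mup x p : nat).

(* The graph K_1 \nabla K_{n-m} \nabla K_{m-1} on vertex set 'I_n:
   block 0 = {0} (K_1), block 1 = {1,...,n-m} (K_{n-m}),
   block 2 = {n-m+1,...,n-1} (K_{m-1}); two distinct vertices are adjacent
   iff they lie in the same block (complete graphs) or in consecutive blocks
   (the sequential join). *)
Definition block (n m : nat) (i : 'I_n) : nat :=
  if (i == 0 :> nat) then 0 else if (i <= n - m)%N then 1 else 2.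

Definition K1_KK (n m : nat) : rel 'I_n :=
  fun i j => (i != j) &&
    [|| block m i == block m j, (block m i).+1 == block m j
      | (block m j).+1 == block m i].

Definition isomorphic (T : finType) (e : rel T) (n : nat) (e' : rel 'I_n) :=
  exists f : T -> 'I_n, bijective f /\ forall x y, e x y = e' (f x) (f y).
Arguments K1_KK : clear implicits.

(* Write q_H(f) = sum over the edges st of H of (f s - f t)^2, so that q_G is the
   Laplacian form of G and q_G + q_Gbar = n |f|^2 - (sum f)^2, Gbar the complement.
   Hence q_G(f) <= (n-2) |f|^2 iff 2 |f|^2 <= (sum f)^2 + q_Gbar(f), and by the
   Courant-Fischer principle m_G[0,n-2] is governed by this inequality. A matching
   a_l b_l of size k in Gbar makes it hold on the span of the constants and the
   d_{a_l} - d_{b_l}, giving k+1 eigenvalues in [0,n-2]. If every edge of Gbar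
   contains a, it fails strictly on {f | f a = 0, sum f = 0}, since there
   q_Gbar(f) <= |f|^2; so there are at most two. When alpha(G) = 2, Gbar is
   triangle-free and has an edge, so m_G[0,n-2] = 2 forbids two disjoint edges in
   Gbar, making Gbar a star K_{1,m-1} plus isolated vertices: the complement of
   K_1 \nabla K_{n-m} \nabla K_{m-1}. *)

From HB Require Import structures.
From mathcomp Require Import all_boot all_order all_algebra.
From mathcomp Require Import polyrcf complex spectral sesquilinear.
From mathcomp Require Import ring lra zify.
Set Implicit Arguments. Unset Strict Implicit. Unset Printing Implicit Defensive.
Import Order.TTheory GRing.Theory Num.Theory Num.Def.
Local Open Scope ring_scope.
Local Open Scope sesquilinear_scope.

Lemma row_free_ker (F : fieldType) m n (B : 'M[F]_(m, n)) :
  (forall z : 'rV_m, z *m B = 0 -> z = 0) -> row_free B.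
Proof. by move=> kerB; rewrite -kermx_eq0; apply/rowV0P => z /sub_kermxP /kerB. Qed.

Lemma wide_mx_ker (F : fieldType) m n (B : 'M[F]_(m, n)) :
  (n < m)%N -> exists2 z : 'rV_m, z != 0 & z *m B = 0.
Proof.
move=> lt_nm; have : ~~ row_free B.
  by rewrite -row_leq_rank -ltnNge (leq_ltn_trans (rank_leq_col B)).
by rewrite -kermx_eq0 => /rowV0Pn [z /sub_kermxP zB zn0]; exists z.
Qed.

Lemma char_poly_similar (F : fieldType) n (P A : 'M[F]_n) : P \in unitmx ->
  char_poly (invmx P *m A *m P) = char_poly A.
Proof.
move=> Pu; rewrite /char_poly.
have -> : char_poly_mx (invmx P *m A *m P) =
   map_mx polyC (invmx P) *m char_poly_mx A *m map_mx polyC P.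
  rewrite /char_poly_mx mulmxBr mulmxBl -!map_mxM; congr (_ - _).
  by rewrite scalar_mxC -mulmxA -map_mxM mulVmx // map_mx1 mulmx1.
rewrite !det_mulmx mulrC mulrA -det_mulmx.
by rewrite -map_mxM mulmxV // map_mx1 det1 mul1r.
Qed.

Lemma sum_count_mem (I : eqType) (l s : seq I) (Q : pred I) :
  uniq l -> {subset s <= l} ->
  (\sum_(x <- l | Q x) count_mem x s = count Q s)%N.
Proof.
move=> ul; elim: s => [|y s IH] sub_s; first by rewrite big1.
rewrite /= big_split /= IH; last by move=> z zs; apply: sub_s; rewrite inE zs orbT.
congr (_ + _)%N; rewrite (big_rem y) ?sub_s ?mem_head // eqxx big1_seq ?addn0.
  by case: (Q y).
move=> x /andP [_ xl]; case: eqP => // yx; subst x.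
by rewrite mem_rem_uniqF in xl.
Qed.

Lemma sum_mup_prod_XsubC (R : rcfType) n (r : 'I_n -> R) (Q : pred R) :
  let p := \prod_(j < n) ('X - (r j)%:P) in
  (\sum_(x <- rootsR p | Q x) mup x p = #|[set j | Q (r j)]|)%N.
Proof.
move=> p.
have pE : p = \prod_(y <- [seq r j | j <- enum 'I_n]) ('X - y%:P).
  by rewrite big_map big_enum.
have pn0 : p != 0 by rewrite pE monic_neq0 // monic_prod_XsubC.
rewrite (eq_bigr (fun x => count_mem x [seq r j | j <- enum 'I_n])); last first.
  by move=> x _; rewrite pE mu_prod_XsubC.
rewrite sum_count_mem ?uniq_roots //.
  by rewrite count_map cardE /enum_mem -size_filter -filter_predI; congr size;
     apply: eq_filter => j; rewrite /= !inE andbT.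
move=> x /mapP [j _ ->].
have := roots_on_rootsR pn0 (r j); rewrite itv_boundlr /= => <-.
by rewrite pE root_prod_XsubC map_f // mem_enum.
Qed.

Section RealForms.
Variable R : rcfType.
Local Notation C := R[i].
Local Notation toC := (real_complex R).

Definition qform n (A : 'M[R]_n) (u : 'rV[R]_n) := \sum_i \sum_j u 0 i * A i j * u 0 j.
Definition normsq n (u : 'rV[R]_n) := \sum_i u 0 i ^+ 2.
Definition cnormsq (z : C) : R := complex.Re z ^+ 2 + complex.Im z ^+ 2.
Definition hform n (M : 'M[C]_n) (x : 'rV[C]_n) := \sum_i \sum_j x 0 i * M i j * (x 0 j)^*.
Definition Remx m n (x : 'M[C]_(m, n)) := map_mx (@complex.Re R) x.
Definition Immx m n (x : 'M[C]_(m, n)) := map_mx (@complex.Im R) x.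

Lemma cnormsq0 : cnormsq 0 = 0.
Proof. by rewrite /cnormsq /= expr2 mul0r addr0. Qed.

Lemma cnormsq_ge0 (z : C) : 0 <= cnormsq z.
Proof. by rewrite addr_ge0 // sqr_ge0. Qed.

Lemma cnormsq_eq0 (z : C) : (cnormsq z == 0) = (z == 0).
Proof. by case: z => a b; rewrite /cnormsq /= paddr_eq0 ?sqr_ge0 // !sqrf_eq0 eq_complex. Qed.

Lemma mulcJ (z : C) : z * z^* = toC (cnormsq z).
Proof. by rewrite add_Re2_Im2 sqr_normc. Qed.

Lemma Remx_mul_real m n p (z : 'M[C]_(m, n)) (W : 'M[R]_(n, p)) :
  Remx (z *m map_mx toC W) = Remx z *m W.
Proof.
apply/matrixP => i j; rewrite !mxE (raddf_sum (@complex.Re R : Rcomplex R -> R)).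
by apply: eq_bigr => k _; rewrite !mxE; case: (z i k) => a b /=; rewrite mulr0 subr0.
Qed.

Lemma Immx_mul_real m n p (z : 'M[C]_(m, n)) (W : 'M[R]_(n, p)) :
  Immx (z *m map_mx toC W) = Immx z *m W.
Proof.
apply/matrixP => i j; rewrite !mxE (raddf_sum (@complex.Im R : Rcomplex R -> R)).
by apply: eq_bigr => k _; rewrite !mxE; case: (z i k) => a b /=; rewrite mulr0 add0r.
Qed.

Lemma ReImmx_eq0 m n (x : 'M[C]_(m, n)) : (x == 0) = (Remx x == 0) && (Immx x == 0).
Proof.
apply/idP/andP => [/eqP -> | [/eqP x_re /eqP x_im]].
  by split; apply/eqP/matrixP => i j; rewrite !mxE.
apply/eqP/matrixP => i j; rewrite [x i j]complexE.
move/matrixP/(_ i j): x_re; move/matrixP/(_ i j): x_im; rewrite !mxE => -> ->.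
by rewrite mulr0 addr0.
Qed.

Lemma hform_real n (B : 'M[R]_n) (x : 'rV[C]_n) : B^T = B ->
  hform (map_mx toC B) x = toC (qform B (Remx x) + qform B (Immx x)).
Proof.
move=> symB; pose Re := @complex.Re R; pose Im := @complex.Im R.
transitivity (toC (\sum_i \sum_j (Re (x 0 i) * B i j * Re (x 0 j) + Im (x 0 i) * B i j * Im (x 0 j)))
   + 'i%C * toC (\sum_i \sum_j (Im (x 0 i) * B i j * Re (x 0 j) - Re (x 0 i) * B i j * Im (x 0 j)))).
  rewrite !rmorph_sum mulr_sumr -big_split; apply: eq_bigr => i _.
  rewrite !rmorph_sum mulr_sumr -big_split; apply: eq_bigr => j _.
  by rewrite mxE; case: (x 0 i) => a b; case: (x 0 j) => c d /=; simpc; congr (_ +i* _)%C; ring.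
have -> : \sum_i \sum_j (Im (x 0 i) * B i j * Re (x 0 j) - Re (x 0 i) * B i j * Im (x 0 j)) = 0.
  under eq_bigr do rewrite sumrB.
  rewrite sumrB exchange_big /=; apply/eqP; rewrite subr_eq0; apply/eqP.
  apply: eq_bigr => i _; apply: eq_bigr => j _.
  have -> : B j i = B i j by rewrite -{1}symB mxE.
  ring.
rewrite rmorph0 mulr0 addr0 /qform -big_split; congr toC.
by apply: eq_bigr => i _; rewrite -big_split; apply: eq_bigr => j _; rewrite !mxE.
Qed.

Lemma hformE n (M : 'M[C]_n) x : hform M x = (x *m M *m x ^t*) 0 0.
Proof.
rewrite /hform mxE exchange_big /=; apply: eq_bigr => j _.
by rewrite mxE mulr_suml; apply: eq_bigr => i _; rewrite !mxE.
Qed.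

Lemma hform_diag n (d : 'rV[C]_n) y : hform (diag_mx d) y = \sum_j y 0 j * d 0 j * (y 0 j)^*.
Proof.
apply: eq_bigr => i _; rewrite (bigD1 i) //= big1 ?addr0; first by rewrite mxE eqxx mulr1n.
by move=> j /negbTE ji; rewrite mxE eq_sym ji mulr0n mulr0 mul0r.
Qed.

Lemma hform_unitary n (U M : 'M[C]_n) x : U \is unitarymx ->
  hform (invmx U *m M *m U) x = hform M (x *m U ^t*).
Proof.
move=> Uu; rewrite !hformE invmx_unitary //.
by rewrite !trmx_mul !map_mxM trmxCK !mulmxA.
Qed.

Lemma qform1 n (u : 'rV[R]_n) : qform 1%:M u = normsq u.
Proof.
apply: eq_bigr => i _; rewrite (bigD1 i) //= big1 ?addr0; first by rewrite mxE eqxx mulr1 expr2.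
by move=> j /negbTE ji; rewrite mxE eq_sym ji mulr0 mul0r.
Qed.

End RealForms.

Section SymmetricSpectrum.
Variable R : rcfType.
Local Notation C := R[i].
Local Notation toC := (real_complex R).
Variables (n : nat) (A : 'M[R]_n).
Hypothesis symA : A^T = A.

Local Notation Ac := (map_mx toC A).
Local Notation U := (spectralmx Ac).

(* spectral.v diagonalises over an algebraically closed field, so A is
   diagonalised through its complexification, whose diagonal is real. *)
Definition eigenvalues (j : 'I_n) : R := complex.Re (spectral_diag Ac 0 j).

Lemma hermitian_complexified : Ac \is hermsymmx.
Proof.
apply/is_hermitianmxP; rewrite expr0 scale1r; apply/matrixP => i j.
rewrite !mxE /= -{1}symA mxE; exact: (esym (conjc_real _)).
Qed.

Lemma complexified_spectral : Ac = invmx U *m diag_mx (spectral_diag Ac) *m U.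
Proof. exact/orthomx_spectralP/hermitian_normalmx/hermitian_complexified. Qed.

Lemma spectral_diag_real j : spectral_diag Ac 0 j = toC (eigenvalues j).
Proof.
rewrite /eigenvalues RRe_real //.
by have /mxOverP := hermitian_spectral_diag_real hermitian_complexified; apply.
Qed.

Lemma char_poly_eigenvalues : char_poly A = \prod_(j < n) ('X - (eigenvalues j)%:P).
Proof.
apply: (@map_poly_inj _ _ toC).
rewrite map_char_poly complexified_spectral char_poly_similar ?spectral_unit //.
rewrite char_poly_trig ?diag_mx_is_trig // rmorph_prod /=.
by apply: eq_bigr => j _; rewrite mxE eqxx mulr1n spectral_diag_real map_polyXsubC.
Qed.

Lemma qform_spectral (x : 'rV[C]_n) (y := x *m U ^t*) :
  qform A (Remx x) + qform A (Immx x) = \sum_j eigenvalues j * cnormsq (y 0 j) /\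
  normsq (Remx x) + normsq (Immx x) = \sum_j cnormsq (y 0 j).
Proof.
split; apply: (@complexI R); rewrite rmorph_sum.
  rewrite -hform_real // complexified_spectral hform_unitary ?spectral_unitarymx //.
  rewrite hform_diag; apply: eq_bigr => j _.
  by rewrite spectral_diag_real mulrAC mulcJ -rmorphM mulrC.
rewrite -!qform1 -hform_real ?trmx1 // map_mx1.
have -> : 1%:M = invmx U *m 1%:M *m U :> 'M[C]_n by rewrite mulmx1 mulVmx ?spectral_unit.
rewrite hform_unitary ?spectral_unitarymx // -diag_const_mx hform_diag.
by apply: eq_bigr => j _; rewrite [const_mx 1 0 j]mxE mulr1 mulcJ.
Qed.

Lemma qform_sub_normsq (x : 'rV[C]_n) (y := x *m U ^t*) c :
  qform A (Remx x) + qform A (Immx x) - c * (normsq (Remx x) + normsq (Immx x)) =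
  \sum_j (eigenvalues j - c) * cnormsq (y 0 j).
Proof.
have [-> ->] := qform_spectral x.
by rewrite mulr_sumr -sumrB; apply: eq_bigr => j _; rewrite mulrBl.
Qed.

Definition eigencount (c : R) : nat := #|[set j | eigenvalues j <= c]|.

Definition select (S : {set 'I_n}) : 'M[C]_(n, #|S|) :=
  \matrix_(i, l) (i == enum_val l)%:R.

Lemma mul_select (S : {set 'I_n}) (y : 'rV[C]_n) l :
  (y *m select S) 0 l = y 0 (enum_val l).
Proof.
rewrite mxE (bigD1 (enum_val l)) //= mxE eqxx mulr1 big1 ?addr0 //.
by move=> i /negbTE il; rewrite mxE il mulr0.
Qed.

(* Courant-Fischer: otherwise some nonzero vector of the (complexified) span of W
   is orthogonal to all eigenvectors with eigenvalue <= c, and its Rayleigh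
   quotient exceeds c. *)
Lemma eigenvalue_count_ge k (W : 'M[R]_(k, n)) c : row_free W ->
  (forall z : 'rV[R]_k, qform A (z *m W) <= c * normsq (z *m W)) ->
  (k <= eigencount c)%N.
Proof.
move=> freeW leW; rewrite /eigencount; set S := [set j | _]; rewrite leqNgt; apply/negP => ltSk.
have [z zn0] := wide_mx_ker (map_mx toC W *m U ^t* *m select S) ltSk.
set x := z *m map_mx toC W; set y := x *m U ^t*.
rewrite !mulmxA -/x -/y => yS0.
have yS j : j \in S -> y 0 j = 0.
  by move=> jS; rewrite -(enum_rankK_in jS jS) -mul_select yS0 mxE.
have [j0 yj0] : exists j, y 0 j != 0.
  apply/rV0Pn; apply: contraNneq zn0 => y0.
  rewrite -(mulmx_free_eq0 z (B := map_mx toC W)) ?row_free_map //.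
  by rewrite -/x -(mulmxKtV x (spectral_unitarymx Ac) (erefl n)) -/y y0 mul0mx.
have : qform A (Remx x) + qform A (Immx x) - c * (normsq (Remx x) + normsq (Immx x)) <= 0.
  rewrite subr_le0 mulrDr /x Remx_mul_real Immx_mul_real.
  exact: lerD.
apply/negP; rewrite -ltNge qform_sub_normsq -/y (bigD1 j0) //=.
apply: ltr_pwDl; last first.
  apply: sumr_ge0 => j _; case: (boolP (j \in S)) => [/yS -> | jS].
    by rewrite cnormsq0 mulr0.
  by rewrite mulr_ge0 ?cnormsq_ge0 // subr_ge0; move: jS; rewrite inE -ltNge => /ltW.
apply: mulr_gt0; last by rewrite lt0r cnormsq_eq0 yj0 cnormsq_ge0.
by rewrite subr_gt0 ltNge; apply: contra yj0 => le_j0; rewrite yS // inE.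
Qed.

(* Dually, ker K would meet the span of the eigenvectors with eigenvalue <= c. *)
Lemma eigenvalue_count_le p (K : 'M[R]_(n, p)) c :
  (forall u : 'rV[R]_n, u *m K = 0 -> u != 0 -> c * normsq u < qform A u) ->
  (eigencount c <= p)%N.
Proof.
move=> gtK; rewrite /eigencount; set S := [set j | _]; rewrite leqNgt; apply/negP => ltpS.
have [w wn0] := wide_mx_ker ((select S)^T *m U *m map_mx toC K) ltpS.
set y := w *m (select S)^T; set x := y *m U.
rewrite !mulmxA -/y -/x => xK.
have xy : x *m U ^t* = y by rewrite mulmxtVK // spectral_unitarymx.
have yS j : j \notin S -> y 0 j = 0.
  move=> jS; rewrite mxE big1 // => l _; rewrite !mxE.
  by case: eqP => [ej|]; [move: jS; rewrite ej enum_valP | rewrite mulr0].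
have yl l : y 0 (enum_val l) = w 0 l.
  rewrite mxE (bigD1 l) //= !mxE eqxx mulr1 big1 ?addr0 // => l' ll'.
  by rewrite !mxE (inj_eq enum_val_inj) eq_sym (negbTE ll') mulr0.
have xn0 : x != 0.
  by apply: contraNneq wn0 => x0; apply/eqP/rowP => l; rewrite -yl -xy x0 mul0mx !mxE.
have leK u : u *m K = 0 -> c * normsq u <= qform A u.
  move=> uK; have [u0 | un0] := eqVneq u 0; last exact/ltW/gtK.
  rewrite u0 /qform /normsq big1 => [|i _]; last by rewrite mxE expr0n.
  by rewrite mulr0 sumr_ge0 // => i _; rewrite big1 // => j _; rewrite !mxE !mul0r.
have [xK_re xK_im] : Remx x *m K = 0 /\ Immx x *m K = 0.
  by rewrite -Remx_mul_real -Immx_mul_real xK; split; apply/matrixP => i j; rewrite !mxE.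
have : c * (normsq (Remx x) + normsq (Immx x)) < qform A (Remx x) + qform A (Immx x).
  move: xn0; rewrite ReImmx_eq0 negb_and mulrDr => /orP [] nz.
    by apply: ltr_leD; [exact: gtK | exact: leK].
  by apply: ler_ltD; [exact: leK | exact: gtK].
rewrite -subr_gt0 qform_sub_normsq xy; apply/negP; rewrite -leNgt.
apply: sumr_le0 => j _; have [jS | /yS ->] := boolP (j \in S).
  by rewrite mulr_le0_ge0 ?cnormsq_ge0 // subr_le0; rewrite inE in jS.
by rewrite cnormsq0 mulr0.
Qed.

Lemma eigenvalues_ge0 : (forall u, 0 <= qform A u) -> forall j, 0 <= eigenvalues j.
Proof.
move=> psdA j; set x := (delta_mx 0 j : 'rV[C]_n) *m U.
have [E _] := qform_spectral x.
rewrite mulmxtVK ?spectral_unitarymx // (bigD1 j) //= big1 in E; last first.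
  by move=> i /negbTE ij; rewrite mxE ij andbF cnormsq0 mulr0.
rewrite mxE !eqxx /cnormsq /= expr1n expr0n !addr0 mulr1 in E.
by rewrite -E addr_ge0.
Qed.

Lemma sum_mup_char_poly c : (forall u, 0 <= qform A u) ->
  \sum_(x <- rootsR (char_poly A) | (0 <= x) && (x <= c)) (mup x (char_poly A) : nat) =
  eigencount c.
Proof.
move=> psdA; rewrite char_poly_eigenvalues sum_mup_prod_XsubC.
by apply: eq_card => j; rewrite !inE eigenvalues_ge0.
Qed.

End SymmetricSpectrum.

Section Complement.
Variables (T : finType) (e : rel T).
Hypothesis sg : simple_graph e.
Local Notation n := #|T|.

Definition coedge (s t : T) := (s != t) && ~~ e s t.

Lemma coedge_sym : symmetric coedge.
Proof. by have [sym _] := sg; move=> s t; rewrite /coedge eq_sym sym. Qed.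

Lemma coedge_neq s t : coedge s t -> s != t.
Proof. by case/andP. Qed.

Lemma coedge_independent (S : {set T}) :
  {in S &, forall u v, u != v -> coedge u v} -> independent e S.
Proof.
have [_ irr] := sg; move=> coS.
apply/forallP => u; apply/implyP => uS; apply/forallP => v; apply/implyP => vS.
have [<- | uv] := eqVneq u v; first by rewrite irr.
by case/andP: (coS u v uS vS uv).
Qed.

Lemma alpha2_coedge : alpha e = 2%N -> exists a b, coedge a b.
Proof.
move=> a2.
have ne : (0 < #|[pred S : {set T} | independent e S]|)%N.
  by apply/card_gt0P; exists set0; rewrite inE; apply: coedge_independent => u; rewrite inE.
have [S0 S0ind S0max] := eq_bigmax_cond (fun S : {set T} => #|S|) ne.
have /cards2P [x [y [xy S0E]]] : #|S0| == 2%N by rewrite -S0max -a2.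
exists x, y; rewrite /coedge xy /=.
move: S0ind; rewrite S0E inE => /forallP /(_ x) /implyP.
rewrite !inE eqxx => /(_ isT) /forallP /(_ y) /implyP.
by rewrite !inE eqxx orbT => /(_ isT).
Qed.

Lemma alpha2_triangle_free : alpha e = 2%N ->
  forall x y z, coedge x y -> coedge y z -> coedge x z -> False.
Proof.
move=> a2 x y z cxy cyz cxz.
have xy := coedge_neq cxy; have yz := coedge_neq cyz; have xz := coedge_neq cxz.
have ind : independent e (x |: [set y; z]).
  apply: coedge_independent => u v; rewrite !inE => /or3P [] /eqP -> /or3P [] /eqP ->;
  by rewrite ?eqxx // => _; rewrite ?cxy ?cyz ?cxz // coedge_sym ?cxy ?cyz ?cxz.
have := @leq_bigmax_cond _ (independent e) (fun S : {set T} => #|S|) _ ind.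
by rewrite -/(alpha e) a2 cardsU1 cards2 !inE negb_or xy xz yz.
Qed.

Lemma coedge_star a b : coedge a b ->
  (forall x y z, coedge x y -> coedge y z -> coedge x z -> False) ->
  (forall a b c d, coedge a b -> coedge c d ->
     a != c -> a != d -> b != c -> b != d -> False) ->
  exists c x, coedge c x /\ (forall s t, coedge s t -> s = c \/ t = c).
Proof.
move=> ab tri no2.
have meet s t : coedge s t -> [|| s == a, s == b, t == a | t == b].
  move=> st; apply: contraT; rewrite !negb_or => /and4P [sa sb ta tb].
  by case: (no2 a b s t ab st); rewrite eq_sym.
have [/forallP Ha | ] := boolP [forall s, forall t, coedge s t ==> (s == a) || (t == a)].
  exists a, b; split => // s t st.
  by move: (Ha s) => /forallP /(_ t) /implyP /(_ st) /orP [] /eqP; [left | right].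
rewrite negb_forall => /existsP [s]; rewrite negb_forall => /existsP [t].
rewrite negb_imply negb_or => /andP [st /andP [sa ta]].
have [y [b_y ya]] : exists y, coedge b y /\ y != a.
  case/or4P: (meet s t st) => /eqP E.
  - by rewrite E eqxx in sa.
  - by exists t; rewrite -E.
  - by rewrite E eqxx in ta.
  - by exists s; rewrite -E coedge_sym.
exists b, a; split => [|s' t' st']; first by rewrite coedge_sym.
have [-> | s'b] := eqVneq s' b; first by left.
have [-> | t'b] := eqVneq t' b; first by right.
have [x [a_x xb]] : exists x, coedge a x /\ x != b.
  case/or4P: (meet s' t' st') => /eqP E.
  - by exists t'; rewrite -E.
  - by rewrite E eqxx in s'b.
  - by exists s'; rewrite -E coedge_sym.
  - by rewrite E eqxx in t'b.
have [xy | xy] := eqVneq x y; first by case: (tri a b y ab b_y); rewrite -xy.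
by case: (no2 a x b y a_x b_y (coedge_neq ab) _ xb xy); rewrite eq_sym.
Qed.

Lemma block_labelling (c : T) (S : {set T}) : c \notin S ->
  exists2 f : T -> 'I_n, bijective f &
    forall t, block #|S|.+1 (f t) = (if t == c then 0 else if t \in S then 2 else 1)%N.
Proof.
move=> cS; set B := [set t | (t != c) && (t \notin S)].
set l := c :: (enum B ++ enum S).
have cB : c \notin B by rewrite inE eqxx.
have l_uniq : uniq l.
  rewrite /= mem_cat !mem_enum negb_or cB cS cat_uniq !enum_uniq /= andbT.
  by apply/hasPn => t; rewrite !mem_enum !inE => ->; rewrite andbF.
have l_all t : t \in l.
  by rewrite inE mem_cat !mem_enum !inE; case: (t == c); case: (t \in S); rewrite ?orbT.
have size_l : size l = n.
  by rewrite -(card_uniqP l_uniq) cardT; apply: eq_cardT => t; rewrite l_all.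
have idx_lt t : (index t l < n)%N by rewrite -size_l index_mem l_all.
exists (fun t => Ordinal (idx_lt t)).
  apply: inj_card_bij; last by rewrite card_ord.
  by move=> x y /(congr1 val) /= /(index_inj c (l_all x) (l_all y)).
have nB : (n - #|S|.+1 = #|B|)%N.
  by rewrite -size_l /= size_cat -!cardE subSS addnK.
move=> t; rewrite /block /= nB; case: (t =P c) => [-> | /eqP tc]; first by rewrite eqxx.
rewrite /= (eq_sym c t) (negbTE tc) index_cat !mem_enum /=.
have [tS | tS] := boolP (t \in S).
  have tB : t \in B = false by rewrite inE tS andbF.
  by rewrite tB -cardE ltnNge leq_addr.
have tB : t \in B by rewrite inE tc tS.
by rewrite tB cardE index_mem mem_enum tB.
Qed.

Lemma star_K1_KK c x : coedge c x -> (forall s t, coedge s t -> s = c \/ t = c) ->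
  exists m : nat, (2 <= m <= n)%N /\ isomorphic e (K1_KK n m).
Proof.
move=> cx star; have [_ irr] := sg; set S := [set t | coedge c t].
have cS : c \notin S by rewrite inE /coedge eqxx.
have [f f_bij blockf] := block_labelling cS.
exists #|S|.+1; split.
  rewrite ltnS card_gt0; apply/andP; split; first by apply/set0Pn; exists x; rewrite inE.
  by have := max_card (c |: S); rewrite cardsU1 cS.
exists f; split => // y z; rewrite /K1_KK !blockf (inj_eq (bij_inj f_bij)).
have [<- | yz] := eqVneq y z; first by rewrite irr.
have -> : e y z = ~~ coedge y z by rewrite /coedge yz negbK.
have -> : coedge y z = ((y == c) && (z \in S)) || ((z == c) && (y \in S)).
  apply/idP/idP => [yz' | /orP [] /andP [/eqP ->]]; rewrite ?inE //; last first.
    by rewrite coedge_sym.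
  case: (star y z yz') => E; rewrite E in yz' *; first by rewrite eqxx yz'.
  by rewrite eqxx [coedge c y]coedge_sym yz' orbT.
have [-> | yc] := eqVneq y c; have [-> | zc] := eqVneq z c.
- by rewrite (negbTE cS).
- by case: (z \in S).
- by case: (y \in S).
- by case: (y \in S); case: (z \in S).
Qed.

Lemma K1_KK_star m : (2 <= m <= n)%N -> isomorphic e (K1_KK n m) ->
  exists c s, coedge c s /\ (forall x y, coedge x y -> x = c \/ y = c).
Proof.
case/andP => m2 mn [f [[g fg gf] fe]].
have n2 : (2 <= n)%N := leq_trans m2 mn.
have n0 : (0 < n)%N := ltnW n2.
have n1 : (n.-1 < n)%N by rewrite ltn_predL.
pose i0 : 'I_n := Ordinal n0; pose i1 : 'I_n := Ordinal n1.
have f_inj : injective f := can_inj fg.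
have block_le2 (i : 'I_n) : (block m i <= 2)%N.
  by rewrite /block; case: ifP => //; case: ifP.
have block0 (i : 'I_n) : block m i = 0%N -> i = i0.
  rewrite /block; case: ifP => [/eqP i_0 _ | _]; last by case: ifP.
  exact: val_inj.
have block_i1 : block m i1 = 2%N.
  rewrite /block /=; case: (n) n2 mn => [|[|k]] //= _ km.
  have -> : (k.+1 <= k.+2 - m)%N = false by apply/negbTE; rewrite -ltnNge; lia.
  by [].
exists (g i0), (g i1); split.
  rewrite /coedge fe !gf /K1_KK /= block_i1 andbF andbT.
  apply/eqP => /(congr1 f); rewrite !gf => /(congr1 val) /=.
  by case: (n) n2 => [|[|k]].
move=> x y /andP [xy]; rewrite fe /K1_KK (inj_eq f_inj) xy /=.
move: (block_le2 (f x)) (block_le2 (f y)) (@block0 (f x)) (@block0 (f y)).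
case: (block m (f x)) => [|[|[|]]] //; case: (block m (f y)) => [|[|[|]]] //=.
all: move=> _ _ hx hy _; first [by left; apply: f_inj; rewrite (hx erefl) gf |
                                by right; apply: f_inj; rewrite (hy erefl) gf].
Qed.

End Complement.

Section LaplacianForm.
Variables (R : rcfType) (T : finType) (e : rel T).
Hypothesis sg : simple_graph e.
Local Notation n := #|T|.

Definition sqsum (f : T -> R) := \sum_t f t ^+ 2.
Definition total (f : T -> R) := \sum_t f t.
Definition dirichlet (g : rel T) (f : T -> R) :=
  \sum_s \sum_t (g s t)%:R * (f s - f t) ^+ 2.
Definition rowfun (u : 'rV[R]_n) (t : T) := u 0 (enum_rank t).

Lemma sum_enum_rank (F : 'I_n -> R) : \sum_(i < n) F i = \sum_t F (enum_rank t).
Proof. by rewrite (reindex enum_rank) //; exists enum_val => t _; rewrite ?enum_rankK ?enum_valK. Qed.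

Lemma normsq_rowfun u : normsq u = sqsum (rowfun u).
Proof. exact: sum_enum_rank. Qed.

Lemma total_rowfun u : total (rowfun u) = (u *m (const_mx 1 : 'cV_n)) 0 0.
Proof. by rewrite mxE sum_enum_rank; apply: eq_bigr => t _; rewrite mxE mulr1. Qed.

Lemma laplacian_sym : (laplacian R e)^T = laplacian R e.
Proof.
have [sym _] := sg; apply/matrixP => i j.
by rewrite !mxE eq_sym sym; case: eqP => [->|]; rewrite ?mulr0 ?mul0r.
Qed.

Lemma dirichlet_ge0 g f : 0 <= dirichlet g f.
Proof. by do 2!apply: sumr_ge0 => ? _; rewrite mulr_ge0 ?ler0n ?sqr_ge0. Qed.

Lemma sum_sqr_diff f :
  \sum_s \sum_t (f s - f t) ^+ 2 = 2 * n%:R * sqsum f - 2 * total f ^+ 2.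
Proof.
transitivity (\sum_(s : T) \sum_(t : T) f s ^+ 2 + \sum_(s : T) \sum_(t : T) f t ^+ 2
   - 2 * \sum_(s : T) \sum_(t : T) f s * f t).
  rewrite mulr_sumr -!big_split -sumrB /=; apply: eq_bigr => s _.
  by rewrite mulr_sumr -!big_split -sumrB /=; apply: eq_bigr => t _; ring.
have -> : \sum_(s : T) \sum_(t : T) f s * f t = total f ^+ 2.
  by rewrite expr2 mulr_suml; apply: eq_bigr => s _; rewrite mulr_sumr.
have -> : \sum_(s : T) \sum_(t : T) f s ^+ 2 = n%:R * sqsum f.
  by rewrite mulr_sumr; apply: eq_bigr => s _; rewrite sumr_const mulr_natl.
have -> : \sum_(s : T) \sum_(t : T) f t ^+ 2 = n%:R * sqsum f by rewrite sumr_const mulr_natl.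
ring.
Qed.

Lemma dirichlet_add_coedge f :
  dirichlet e f + dirichlet (coedge e) f = 2 * n%:R * sqsum f - 2 * total f ^+ 2.
Proof.
have [_ irr] := sg; rewrite /dirichlet -sum_sqr_diff -big_split; apply: eq_bigr => s _.
rewrite -big_split /=; apply: eq_bigr => t _; rewrite /coedge -mulrDl.
have [-> | st] := eqVneq s t; first by rewrite irr subrr expr2 !mulr0.
by case: (e s t); rewrite /= ?add0r ?addr0 mul1r.
Qed.

Lemma qform_laplacian_deg u :
  qform (laplacian R e) u = \sum_s (deg e s)%:R * rowfun u s ^+ 2 -
    \sum_s \sum_t (e s t)%:R * (rowfun u s * rowfun u t).
Proof.
have [_ irr] := sg; rewrite /qform sum_enum_rank -sumrB; apply: eq_bigr => s _.
rewrite sum_enum_rank (bigD1 s) //= [in RHS](bigD1 s) //= !mxE !enum_rankK eqxx irr /=.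
rewrite mul1r subr0 mul0r add0r -sumrN; congr (_ + _); first by rewrite /rowfun; ring.
apply: eq_bigr => t ts; rewrite !mxE !enum_rankK (inj_eq enum_rank_inj) eq_sym (negbTE ts).
by rewrite mul0r sub0r /rowfun; ring.
Qed.

Lemma dirichlet_deg f : dirichlet e f =
  2 * (\sum_s (deg e s)%:R * f s ^+ 2 - \sum_s \sum_t (e s t)%:R * (f s * f t)).
Proof.
have [sym _] := sg.
have deg_sum s : (deg e s)%:R = \sum_t (e s t)%:R :> R.
  rewrite /deg -sum1_card natr_sum big_mkcond; apply: eq_bigr => t _.
  by rewrite inE; case: (e s t).
transitivity (\sum_s \sum_t (e s t)%:R * f s ^+ 2 + \sum_s \sum_t (e s t)%:R * f t ^+ 2
   - 2 * \sum_s \sum_t (e s t)%:R * (f s * f t)).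
  rewrite mulr_sumr -!big_split -sumrB /=; apply: eq_bigr => s _.
  by rewrite mulr_sumr -!big_split -sumrB /=; apply: eq_bigr => t _; ring.
have deg_l s : \sum_t (e s t)%:R * f s ^+ 2 = (deg e s)%:R * f s ^+ 2.
  by rewrite deg_sum mulr_suml.
have deg_r t : \sum_s (e s t)%:R * f t ^+ 2 = (deg e t)%:R * f t ^+ 2.
  by rewrite deg_sum mulr_suml; apply: eq_bigr => s _; rewrite sym.
rewrite [X in _ + X - _]exchange_big /= (eq_bigr _ (fun s _ => deg_l s)).
rewrite [X in _ + X - _](eq_bigr _ (fun t _ => deg_r t)); ring.
Qed.

Lemma qform_laplacian_dirichlet u : 2 * qform (laplacian R e) u = dirichlet e (rowfun u).
Proof. by rewrite dirichlet_deg qform_laplacian_deg. Qed.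

Lemma qform_laplacian u :
  2 * qform (laplacian R e) u =
  2 * n%:R * sqsum (rowfun u) - 2 * total (rowfun u) ^+ 2 - dirichlet (coedge e) (rowfun u).
Proof. by rewrite -dirichlet_add_coedge addrK qform_laplacian_dirichlet. Qed.

Lemma qform_laplacian_ge0 u : 0 <= qform (laplacian R e) u.
Proof.
have := dirichlet_ge0 e (rowfun u).
by rewrite -qform_laplacian_dirichlet pmulr_rge0.
Qed.

Lemma mG_closed_eigencount c : mG_closed e 0 c = eigencount (laplacian R e) c.
Proof. exact: (sum_mup_char_poly laplacian_sym _ qform_laplacian_ge0). Qed.

Lemma total_shift a g f : f =1 (fun t => a + g t) -> total f = n%:R * a + total g.
Proof. by move=> fE; rewrite /total (eq_bigr _ (fun t _ => fE t)) big_split /= sumr_const mulr_natl. Qed.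

Lemma sqsum_shift a g f : f =1 (fun t => a + g t) -> total g = 0 ->
  sqsum f = n%:R * a ^+ 2 + sqsum g.
Proof.
move=> fE g0; rewrite /sqsum (eq_bigr (fun t => a ^+ 2 + 2 * a * g t + g t ^+ 2)); last first.
  by move=> t _; rewrite fE; ring.
rewrite !big_split /= -[\sum_t _ * g t]mulr_sumr -/(total g) g0 mulr0 addr0.
by rewrite sumr_const mulr_natl.
Qed.

Lemma dirichlet_shift h a g f : f =1 (fun t => a + g t) -> dirichlet h f = dirichlet h g.
Proof.
move=> fE; apply: eq_bigr => s _; apply: eq_bigr => t _.
by rewrite !fE opprD addrACA subrr add0r.
Qed.

Local Notation cnt := (eigencount (laplacian R e) (n - 2)%:R).

Lemma rowfun_const_col k (W : 'M[R]_(k, n)) (z : 'rV_(1 + k)) :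
  rowfun (z *m col_mx (const_mx 1 : 'rV_n) W) =1
    (fun t => lsubmx z 0 0 + rowfun (rsubmx z *m W) t).
Proof.
move=> t; rewrite -[z]hsubmxK mul_row_col row_mxKl row_mxKr /rowfun mxE.
by congr (_ + _); rewrite mxE big_ord1 [const_mx _ _ _]mxE mulr1.
Qed.

Lemma row_free_const_col k (W : 'M[R]_(k, n)) : (0 < n)%N -> row_free W ->
  (forall z : 'rV_k, total (rowfun (z *m W)) = 0) -> row_free (col_mx (const_mx 1 : 'rV_n) W).
Proof.
move=> n_gt0 freeW totW; apply: row_free_ker => z zV.
have a0 : lsubmx z 0 0 = 0.
  have := total_shift (rowfun_const_col W z); rewrite totW addr0 zV.
  rewrite /total big1 => [/esym/eqP|t _]; last by rewrite /rowfun mxE.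
  by rewrite mulf_eq0 pnatr_eq0 (negbTE (lt0n_neq0 n_gt0)) => /eqP.
have l0 : lsubmx z = 0 by apply/rowP => i; rewrite ord1 a0 mxE.
have r0 : rsubmx z = 0.
  apply/eqP; rewrite -(mulmx_free_eq0 _ freeW); apply/eqP.
  by move: zV; rewrite -[z]hsubmxK mul_row_col row_mxKr l0 mul0mx add0r.
by rewrite -[z]hsubmxK l0 r0 row_mx0.
Qed.

(* Adjoining the constant vector costs nothing: on it the required inequality
   reads 4 n a^2 <= 2 n^2 a^2. *)
Lemma eigencount_ge k (W : 'M[R]_(k, n)) : (2 <= n)%N -> row_free W ->
  (forall z : 'rV_k, total (rowfun (z *m W)) = 0) ->
  (forall z : 'rV_k, 4 * sqsum (rowfun (z *m W)) <= dirichlet (coedge e) (rowfun (z *m W))) ->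
  (k.+1 <= cnt)%N.
Proof.
move=> n2 freeW totW testW.
apply: (eigenvalue_count_ge laplacian_sym (row_free_const_col (ltnW n2) freeW totW)) => z.
have shift := rowfun_const_col W z.
rewrite -(@ler_pM2l _ 2) // qform_laplacian normsq_rowfun.
rewrite (total_shift shift) (sqsum_shift shift (totW _)) (dirichlet_shift _ shift).
rewrite totW addr0 natrB //.
have := testW (rsubmx z); have n2R : 2 <= n%:R :> R by rewrite (ler_nat R 2).
have : 0 <= (n%:R - 2) * n%:R * lsubmx z 0 0 ^+ 2 :> R.
  by rewrite mulr_ge0 ?sqr_ge0 // mulr_ge0 ?subr_ge0 // (le_trans _ n2R).
nra.
Qed.

Lemma eigencount_le2 a : (2 <= n)%N ->
  (forall f, f a = 0 -> total f = 0 -> (exists t, f t != 0) ->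
     dirichlet (coedge e) f < 4 * sqsum f) ->
  (cnt <= 2)%N.
Proof.
move=> n2 testK.
pose K : 'M[R]_(n, 1 + 1) := row_mx (delta_mx (enum_rank a) 0) (const_mx 1).
apply: (eigenvalue_count_le laplacian_sym (K := K)) => u.
rewrite mul_mx_row -row_mx0 => /eq_row_mx [ua utot] un0.
have fa : rowfun u a = 0 by move/matrixP/(_ 0 0): ua; rewrite -colE !mxE.
have ftot : total (rowfun u) = 0 by rewrite total_rowfun utot mxE.
have [i ui] := rV0Pn _ un0.
have ft : rowfun u (enum_val i) != 0 by rewrite /rowfun enum_valK.
have test := testK _ fa ftot (ex_intro (fun t => rowfun u t != 0) _ ft).
rewrite -(@ltr_pM2l _ 2) // qform_laplacian normsq_rowfun ftot natrB //.
nra.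
Qed.

Lemma sum_indicator_mul a (F : T -> R) : \sum_t (t == a)%:R * F t = F a.
Proof. by rewrite (bigD1 a) //= eqxx mul1r big1 ?addr0 // => t /negbTE ->; rewrite mul0r. Qed.

Lemma dirichlet_star a f : (forall s t, coedge e s t -> s = a \/ t = a) -> f a = 0 ->
  dirichlet (coedge e) f <= 2 * sqsum f.
Proof.
move=> star fa.
have E1 : \sum_s \sum_t (s == a)%:R * (f s - f t) ^+ 2 = sqsum f.
  under eq_bigr do rewrite -mulr_sumr.
  by rewrite sum_indicator_mul fa; apply: eq_bigr => t _; rewrite sub0r sqrrN.
have E2 : \sum_s \sum_t (t == a)%:R * (f s - f t) ^+ 2 = sqsum f.
  rewrite exchange_big /=; under eq_bigr do rewrite -mulr_sumr.
  by rewrite sum_indicator_mul fa; apply: eq_bigr => s _; rewrite subr0.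
rewrite mulr_natl mulr2n -{1}E1 -E2 -big_split /=; apply: ler_sum => s _.
rewrite -big_split /=; apply: ler_sum => t _; rewrite -mulrDl.
apply: ler_wpM2r; first exact: sqr_ge0.
case cst: (coedge e s t) => /=; last by rewrite addr_ge0.
by case: (star s t cst) => ->; rewrite eqxx ?lerDl ?lerDr ler0n.
Qed.

Lemma star_eigencount a : (2 <= n)%N ->
  (forall s t, coedge e s t -> s = a \/ t = a) -> (cnt <= 2)%N.
Proof.
move=> n2 star; apply: (eigencount_le2 (a := a) n2) => f fa _ [t0 ft0].
have sq_pos : 0 < sqsum f.
  rewrite /sqsum (bigD1 t0) //= ltr_pwDl ?sumr_ge0 // => [|t _]; last exact: sqr_ge0.
  by rewrite lt0r sqrf_eq0 ft0 sqr_ge0.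
have := dirichlet_star star fa; lra.
Qed.

Lemma dirichlet_ge_pairs (g : rel T) (ps : seq (T * T)) f :
  uniq ps -> all (fun p => g p.1 p.2) ps ->
  \sum_(p <- ps) (f p.1 - f p.2) ^+ 2 <= dirichlet g f.
Proof.
move=> ups gps; rewrite /dirichlet pair_bigA /= big_uniq //= big_mkcond /=.
apply: ler_sum => p _; case: ifP => pps; last by rewrite mulr_ge0 ?ler0n ?sqr_ge0.
by have /allP /(_ p pps) -> := gps; rewrite mul1r.
Qed.

Section Matching.
Variables (k : nat) (a b : 'I_k -> T).
Hypotheses (inj_a : injective a) (inj_b : injective b) (ab_neq : forall l l', a l != b l').

Definition matching_mx : 'M[R]_(k, n) :=
  \matrix_(l, i) ((enum_val i == a l)%:R - (enum_val i == b l)%:R).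

Local Notation g z := (rowfun (z *m matching_mx)).

Lemma rowfun_matching (z : 'rV[R]_k) t : g z t = \sum_l z 0 l * ((t == a l)%:R - (t == b l)%:R).
Proof. by rewrite /rowfun mxE; apply: eq_bigr => l _; rewrite mxE enum_rankK. Qed.

Lemma matching_at_a (z : 'rV[R]_k) l : g z (a l) = z 0 l.
Proof.
rewrite rowfun_matching (bigD1 l) //= eqxx (negbTE (ab_neq l l)) subr0 mulr1.
rewrite big1 ?addr0 // => l' ll'.
by rewrite (inj_eq inj_a) eq_sym (negbTE ll') (negbTE (ab_neq l l')) subrr mulr0.
Qed.

Lemma matching_at_b (z : 'rV[R]_k) l : g z (b l) = - z 0 l.
Proof.
rewrite rowfun_matching (bigD1 l) //= eqxx eq_sym (negbTE (ab_neq l l)) sub0r mulrN1.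
rewrite big1 ?addr0 // => l' ll'.
by rewrite eq_sym (negbTE (ab_neq l' l)) (inj_eq inj_b) eq_sym (negbTE ll') subrr mulr0.
Qed.

Lemma total_matching (z : 'rV[R]_k) : total (g z) = 0.
Proof.
rewrite /total (eq_bigr _ (fun t _ => rowfun_matching z t)) exchange_big /= big1 // => l _.
have sum1 (x : T) : \sum_t (t == x)%:R = 1 :> R.
  by rewrite -[RHS](sum_indicator_mul x (fun=> 1)); apply: eq_bigr => t _; rewrite mulr1.
by rewrite -mulr_sumr sumrB !sum1 subrr mulr0.
Qed.

Lemma sqsum_matching (z : 'rV[R]_k) : sqsum (g z) = 2 * \sum_l z 0 l ^+ 2.
Proof.
set f := g z; transitivity (\sum_l z 0 l * (f (a l) - f (b l))).
  rewrite /sqsum (eq_bigr (fun t => \sum_l z 0 l * (((t == a l)%:R - (t == b l)%:R) * f t))).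
    rewrite exchange_big /=; apply: eq_bigr => l _; rewrite -mulr_sumr.
    by under eq_bigr do rewrite mulrBl; rewrite sumrB !sum_indicator_mul.
  move=> t _; rewrite expr2 {1}/f rowfun_matching mulr_suml.
  by apply: eq_bigr => l _; rewrite mulrA.
rewrite mulr_sumr; apply: eq_bigr => l _; rewrite /f matching_at_a matching_at_b; ring.
Qed.

Lemma dirichlet_matching (z : 'rV[R]_k) : (forall l, coedge e (a l) (b l)) ->
  8 * \sum_l z 0 l ^+ 2 <= dirichlet (coedge e) (g z).
Proof.
move=> co; set f := g z.
pose ps := [seq (a l, b l) | l <- enum 'I_k] ++ [seq (b l, a l) | l <- enum 'I_k].
have ps_uniq : uniq ps.
  have inj_ab : injective (fun l => (a l, b l)) by move=> l l' [/inj_a ->].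
  have inj_ba : injective (fun l => (b l, a l)) by move=> l l' [/inj_b ->].
  rewrite cat_uniq (map_inj_uniq inj_ab) (map_inj_uniq inj_ba) enum_uniq /= andbT.
  apply/hasPn => _ /mapP [l _ ->]; apply/mapP => [[l' _ [bl _]]].
  by move: (ab_neq l' l); rewrite bl eqxx.
have ps_co : all (fun p => coedge e p.1 p.2) ps.
  rewrite all_cat !all_map; apply/andP; split; apply/allP => l _ /=; first exact: co.
  by rewrite (coedge_sym sg) co.
apply: le_trans (dirichlet_ge_pairs f ps_uniq ps_co).
rewrite big_cat /= !big_map -big_split mulr_sumr; apply: ler_sum => l _ /=.
rewrite /f matching_at_a matching_at_b; nra.
Qed.

End Matching.

Lemma matching_eigencount k (a b : 'I_k -> T) : (2 <= n)%N ->
  injective a -> injective b -> (forall l l', a l != b l') ->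
  (forall l, coedge e (a l) (b l)) -> (k.+1 <= cnt)%N.
Proof.
move=> n2 inj_a inj_b ab_neq co.
apply: (eigencount_ge (W := matching_mx a b) n2) => [|z|z].
- apply: row_free_ker => z zW; apply/rowP => l.
  by rewrite -(matching_at_a inj_a ab_neq) zW [RHS]mxE /rowfun mxE.
- exact: total_matching.
- have := dirichlet_matching inj_a inj_b ab_neq z co.
  by rewrite sqsum_matching //; lra.
Qed.

Lemma coedge_eigencount a b : (2 <= n)%N -> coedge e a b -> (2 <= cnt)%N.
Proof.
move=> n2 ab; have inj1 (f : 'I_1 -> T) : injective f by move=> i j _; rewrite !ord1.
apply: (matching_eigencount (a := fun=> a) (b := fun=> b) n2) => //.
by move=> _ _; apply: coedge_neq ab.
Qed.

Lemma two_coedges_eigencount a b c d : (2 <= n)%N -> coedge e a b -> coedge e c d ->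
  a != c -> a != d -> b != c -> b != d -> (3 <= cnt)%N.
Proof.
move=> n2 ab cd ac ad bc bd.
have inj2 (u v : T) : u != v -> injective (fun l : 'I_2 => if l == ord0 then u else v).
  move=> uv i j; have [-> | i0] := eqVneq i ord0; have [-> | j0] := eqVneq j ord0 => //=.
  - by move=> uv'; rewrite uv' eqxx in uv.
  - by move=> uv'; rewrite uv' eqxx in uv.
  move=> _; apply: val_inj; move: (ltn_ord i) (ltn_ord j) i0 j0; rewrite -!val_eqE /=; lia.
apply: (matching_eigencount (a := fun l => if l == ord0 then a else c)
                            (b := fun l => if l == ord0 then b else d) n2).
- exact: inj2.
- exact: inj2.
- move=> l l'; case: (l == ord0); case: (l' == ord0).
  all: try by rewrite ?(coedge_neq ab) ?(coedge_neq cd).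
  exact: contra_neq esym bc.
- by move=> l; case: (l == ord0).
Qed.

End LaplacianForm.

Theorem mainTheorem2 (R : rcfType) (T : finType) (e : rel T) :
  simple_graph e ->
  alpha e = 2%N ->
  (mG_closed e (0 : R) (#|T| - 2)%N%:R = 2%N <->
   exists m : nat, (2 <= m <= #|T|)%N /\ isomorphic e (K1_KK #|T| m)).
Proof.
move=> sg a2; have [a [b ab]] := alpha2_coedge sg a2.
have n2 : (2 <= #|T|)%N.
  by have := max_card [set a; b]; rewrite cards2 (coedge_neq ab).
rewrite (mG_closed_eigencount (R := R) sg); split => [cnt2 | [m [mn iso]]].
  have no2 a' b' c' d' : coedge e a' b' -> coedge e c' d' ->
      a' != c' -> a' != d' -> b' != c' -> b' != d' -> False.
    move=> ab' cd' ac' ad' bc' bd'.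
    by have := two_coedges_eigencount R sg n2 ab' cd' ac' ad' bc' bd'; rewrite cnt2.
  have [c [x [cx star]]] := coedge_star sg ab (alpha2_triangle_free sg a2) no2.
  exact: (star_K1_KK sg cx star).
have [c [s [cs star]]] := K1_KK_star mn iso.
by apply/eqP; rewrite eqn_leq (star_eigencount R sg n2 star) (coedge_eigencount R sg n2 cs).
Qed.
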